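(* Let the lattice be one of the standard lattices D2Q9, D3Q19 or D3Q27 (velocities $\boldsymbol{e}_i$, weights $w_i$, $c_s^2=c^2/3$, as described in the context), and let the symmetric subspace admit the orthogonal decomposition $\mathcal{S}=\mathcal{S}^{(0)}\oplus\mathcal{S}^{(2)}\oplus\mathcal{S}^{(G)}$, where $\mathcal{S}^{(G)}$ is spanned by the vectors $(w_i\phi^{(G)}_{i,k})_i$, $k=1,\dots,N_G$, for mutually orthogonal ghost functions $\phi^{(G)}_{\cdot,k}$ (i.e. $\sum_i w_i\phi^{(G)}_{i,k}\phi^{(G)}_{i,l}=0$ for $k\neq l$). Let $f^{\mathrm{neq}}\in\mathbb{R}^Q$ satisfy mass conservation $\sum_i f_i^{\mathrm{neq}}=0$. Then for every $i$, $$ w_i\frac{\mathcal{H}^{(2)}_{i,\alpha\beta}}{2c_s^4}\mathcal{A}^{\mathrm{neq}}_{\alpha\beta} \;=\; f_i^{\mathrm{neq},+}-(\hat P^{(G)}f^{\mathrm{neq}})_i, $$ where $\mathcal{A}^{\mathrm{neq}}_{\alpha\beta}=\sum_j \mathcal{H}^{(2)}_{j,\alpha\beta}f_j^{\mathrm{neq}}$ (summation over repeated Greek indices), $f_i^{\mathrm{neq},+}=\tfrac12(f_i^{\mathrm{neq}}+f_{\bar i}^{\mathrm{neq}})$, and $$(\hat P^{(G)}f^{\mathrm{neq}})_i=\sum_{k=1}^{N_G}\frac{w_i\,\phi^{(G)}_{i,k}}{N^{(\phi)}_{G,k}}\sum_j\phi^{(G)}_{j,k}f_j^{\mathrm{neq}},\qquad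 N^{(\phi)}_{G,k}=\sum_j w_j\big(\phi^{(G)}_{j,k}\big)^2.$$
   Context: Lattices (lattice speed $c>0$, $c_s^2=c^2/3$): D2Q9 has velocities $0$, $(\pm c,0)$, $(0,\pm c)$ with weights $4/9,1/9$ and $(\pm c,\pm c)$ with weight $1/36$; D3Q19 has the rest velocity (weight $1/3$), the 6 axial velocities $\pm c\,\boldsymbol{\hat e}_\alpha$ (weight $1/18$) and the 12 face-diagonal velocities with two components $\pm c$ and one $0$ (weight $1/36$); D3Q27 has the rest velocity (weight $8/27$), axial (weight $2/27$), face-diagonal (weight $1/54$) and the 8 body-diagonal velocities $(\pm c,\pm c,\pm c)$ (weight $1/216$). $Q$ is the number of velocities, $D$ the dimension. For each $i$, $\bar i$ denotes the index with $\boldsymbol{e}_{\bar i}=-\boldsymbol{e}_i$ (so $w_{\bar i}=w_i$). Hermite tensors: $\mathcal{H}^{(2)}_{i,\alpha\beta}=e_{i\alpha}e_{i\beta}-c_s^2\delta_{\alpha\beta}$. The space $\mathbb{R}^Q$ carries the inner product $\langle f,g\rangle=\sum_i f_ig_i/w_i$. The symmetric subspace is $\mathcal{S}=\{f: f_i=f_{\bar i}\ \forall i\}$. $\mathcal{S}^{(0)}=\mathrm{span}\{(w_i)_i\}$, $\mathcal{S}^{(2)}=\mathrm{span}\{(w_i\mathcal{H}^{(2)}_{i,\alpha\beta})_i:\alpha,\beta\}$, and $\mathcal{S}^{(G)}$ is the ''ghost'' subspace spanned by $(w_i\phi^{(G)}_{i,k})_i$ with $\phi^{(G)}_{\cdot,k}$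 even under inversion. The decomposition hypothesis means these three subspaces are mutually orthogonal for $\langle\cdot,\cdot\rangle$ and their direct sum is $\mathcal{S}$. (For D2Q9, $N_G=1$ and $\phi^{(G)}_i=(e_{ix}^2-c_s^2)(e_{iy}^2-c_s^2)$.) *)

From mathcomp Require Import all_boot all_order all_algebra.
Set Implicit Arguments. Unset Strict Implicit. Unset Printing Implicit Defensive.
Import Order.TTheory GRing.Theory Num.Theory.
Local Open Scope ring_scope.

Inductive lattice := D2Q9 | D3Q19 | D3Q27.

Definition dim (L : lattice) : nat := match L with D2Q9 => 2 | _ => 3 end.

Fixpoint cube (d : nat) : seq (seq int) :=
  match d with
  | 0 => [:: [::]]
  | d'.+1 => flatten [seq [seq x :: s | s <- cube d'] | x <- [:: 0%Z; 1%Z; (-1)%Z]]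
  end.

Definition nnz (v : seq int) : nat := count (fun x => x != 0) v.

(** unit velocities (to be scaled by the lattice speed c) *)
Definition vels (L : lattice) : seq (seq int) :=
  match L with
  | D2Q9 => cube 2
  | D3Q19 => [seq v <- cube 3 | (nnz v <= 2)%N]
  | D3Q27 => cube 3
  end.

Definition wt (L : lattice) (k : nat) : rat :=
  match L, k with
  | D2Q9, 0 => 4%:R / 9%:R | D2Q9, 1 => 1 / 9%:R | D2Q9, _ => 1 / 36%:R
  | D3Q19, 0 => 1 / 3%:R | D3Q19, 1 => 1 / 18%:R | D3Q19, _ => 1 / 36%:R
  | D3Q27, 0 => 8%:R / 27%:R | D3Q27, 1 => 2%:R / 27%:R
  | D3Q27, 2 => 1 / 54%:R | D3Q27, _ => 1 / 216%:R
  end.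

Definition Q (L : lattice) : nat := size (vels L).

Definition uvel (L : lattice) (i : 'I_(Q L)) : seq int := nth [::] (vels L) i.

Section Lattice.
Variable R : realFieldType.

Definition e (L : lattice) (c : R) (i : 'I_(Q L)) (a : 'I_(dim L)) : R :=
  c * ((uvel i)`_a)%:~R.

Definition w (L : lattice) (i : 'I_(Q L)) : R := ratr (wt L (nnz (uvel i))).

Definition bar (L : lattice) (i : 'I_(Q L)) : 'I_(Q L) :=
  insubd i (index [seq - x | x <- uvel i] (vels L)).

Definition cs2 (c : R) : R := c ^+ 2 / 3%:R.

Definition H2 (L : lattice) (c : R) (i : 'I_(Q L)) (a b : 'I_(dim L)) : R :=
  e c i a * e c i b - cs2 c * (a == b)%:R.

Definition ip (L : lattice) (f g : 'I_(Q L) -> R) : R :=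
  \sum_i f i * g i / w i.

Definition Ssym (L : lattice) (f : 'I_(Q L) -> R) : Prop := forall i, f i = f (bar i).

Definition S0 (L : lattice) (f : 'I_(Q L) -> R) : Prop :=
  exists a : R, forall i, f i = a * w i.

Definition S2 (L : lattice) (c : R) (f : 'I_(Q L) -> R) : Prop :=
  exists A : 'I_(dim L) -> 'I_(dim L) -> R,
    forall i, f i = \sum_a \sum_b A a b * (w i * H2 c i a b).

Definition SG (L : lattice) (NG : nat) (phi : 'I_NG -> 'I_(Q L) -> R)
    (f : 'I_(Q L) -> R) : Prop :=
  exists b : 'I_NG -> R, forall i, f i = \sum_k b k * (w i * phi k i).

Definition decomposition (L : lattice) (c : R) (NG : nat)
    (phi : 'I_NG -> 'I_(Q L) -> R) : Prop :=
  [/\ (forall f g : 'I_(Q L) -> R, S0 f -> S2 c g -> ip f g = 0),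
      (forall f g, S0 f -> SG phi g -> ip f g = 0),
      (forall f g, S2 c f -> SG phi g -> ip f g = 0),
      (forall f, S0 f \/ S2 c f \/ SG phi f -> Ssym f) &
      (forall f, Ssym f -> exists f0 f2 fG, [/\ S0 f0, S2 c f2, SG phi fG &
                                              forall i, f i = f0 i + f2 i + fG i])].

Definition Aneq (L : lattice) (c : R) (f : 'I_(Q L) -> R) (a b : 'I_(dim L)) : R :=
  \sum_j H2 c j a b * f j.

Definition NGk (L : lattice) (NG : nat) (phi : 'I_NG -> 'I_(Q L) -> R) (k : 'I_NG) : R :=
  \sum_j w j * (phi k j) ^+ 2.

Definition PG (L : lattice) (NG : nat) (phi : 'I_NG -> 'I_(Q L) -> R)
    (f : 'I_(Q L) -> R) (i : 'I_(Q L)) : R :=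
  \sum_k (w i * phi k i) / NGk phi k * \sum_j phi k j * f j.

End Lattice.
Arguments w R {L} i.

From Pilot Require Import Defs.
From mathcomp Require Import all_boot all_order all_algebra.
From mathcomp Require Import ring.
Import Order.TTheory GRing.Theory Num.Theory.
Set Implicit Arguments. Unset Strict Implicit. Unset Printing Implicit Defensive.
Local Open Scope ring_scope.

(* The symmetric part f^+ of f lies in S, so f^+ = f0 + f2 + fG with summands in S^(0),
   S^(2), S^(G).  Since (w_i) spans S^(0), orthogonality makes f2 and fG sum to zero, and
   mass conservation with sum_i w_i = 1 then forces f0 = 0.  Because H^(2) and the ghost
   functions are even, A^neq and P^(G) only see f^+.  The fourth-order isotropy of these
   lattices, sum_i w_i H_{i,ab} H_{i,a'b'} = c_s^4 (d_{aa'} d_{bb'} + d_{ab'} d_{ba'}),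
   together with S^(2) _|_ S^(G), turns A^neq into c_s^4 (A + A^T), A the coefficients of
   f2, so the left-hand side is f2_i; orthogonality of the ghost functions gives
   P^(G) f = fG, and f^+_i - fG_i = f2_i. *)

Definition hermite3 (u : seq int) (a b : nat) : int := 3 * (u`_a * u`_b) - (a == b)%:R.

Definition isotropic4 (L : lattice) : bool :=
  let I := iota 0 (Defs.dim L) in
  all (fun a => all (fun b => all (fun a' => all (fun b' =>
    \sum_(u <- vels L) wt L (nnz u) * (hermite3 u a b)%:~R * (hermite3 u a' b')%:~R
    == ((a == a') && (b == b'))%:R + ((a == b') && (b == a'))%:R) I) I) I) I.

Lemma vels_uniq L : uniq (vels L).
Proof. by case: L; vm_compute. Qed.

Lemma vels_opp_closed L u : u \in vels L -> map -%R u \in vels L.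
Proof.
have: all (fun u => map -%R u \in vels L) (vels L) by case: L; vm_compute.
by move/allP; apply.
Qed.

Lemma wt_gt0 L k : 0 < wt L k.
Proof. by case: L; case: k => [|[|[|k]]]; vm_compute. Qed.

Lemma sum_wt L : \sum_(u <- vels L) wt L (nnz u) = 1.
Proof. by case: L; rewrite unlock; vm_compute. Qed.

Lemma lattice_isotropic4 L : isotropic4 L.
Proof. by case: L; rewrite /isotropic4 unlock; vm_compute. Qed.

Lemma big_uvel {L} {V : zmodType} (F : seq int -> V) :
  \sum_(i < Q L) F (uvel i) = \sum_(u <- vels L) F u.
Proof. by rewrite (big_nth [::]) big_mkord. Qed.

Lemma uvel_bar L (i : 'I_(Q L)) : uvel (bar i) = map -%R (uvel i).
Proof.
have /vels_opp_closed vi : uvel i \in vels L by exact: mem_nth.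
by rewrite /uvel /bar val_insubd index_mem vi nth_index.
Qed.

Lemma barK L : involutive (@bar L).
Proof.
move=> i; apply: val_inj; rewrite {1}/bar val_insubd uvel_bar (mapK opprK).
by rewrite index_uniq ?vels_uniq ?ltn_ord.
Qed.

Section LatticeMoments.
Variables (R : realFieldType) (L : lattice).
Implicit Types (c : R) (i j : 'I_(Q L)) (a b : 'I_(Defs.dim L)).

Lemma w_gt0 i : 0 < w R i.
Proof. by rewrite ltr0q wt_gt0. Qed.

Lemma sum_w : \sum_(i < Q L) w R i = 1.
Proof.
by rewrite /w (big_uvel (fun u => ratr (wt L (nnz u)))) -rmorph_sum sum_wt rmorph1.
Qed.

Lemma H2_hermite3 c i a b : H2 c i a b = cs2 c * (hermite3 (uvel i) a b)%:~R.
Proof.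
rewrite /H2 /e /cs2 /hermite3 -[val a == val b]/(a == b) intrB !intrM.
have n3 : (3%:R : R) != 0 by rewrite pnatr_eq0.
by case: (a == b); rewrite ?mulr1n ?mulr0n /=; field.
Qed.

Lemma H2_bar c i a b : H2 c (bar i) a b = H2 c i a b.
Proof.
have nthN (u : seq int) n : (map -%R u)`_n = - u`_n.
  by elim: u n => [|x u IH] [|n] //=; rewrite oppr0.
by rewrite !H2_hermite3 uvel_bar /hermite3 !nthN mulrNN.
Qed.

Lemma H2C c i a b : H2 c i a b = H2 c i b a.
Proof. by rewrite /H2 mulrC eq_sym. Qed.

Lemma H2_fourth_moment c a b a' b' :
  \sum_(j < Q L) w R j * H2 c j a b * H2 c j a' b' =
  cs2 c ^+ 2 * (((a == a') && (b == b'))%:R + ((a == b') && (b == a'))%:R).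
Proof.
have mem (x : 'I_(Defs.dim L)) : val x \in iota 0 (Defs.dim L).
  by rewrite mem_iota leq0n add0n ltn_ord.
have /eqP := allP (allP (allP (allP (lattice_isotropic4 L)
  _ (mem a)) _ (mem b)) _ (mem a')) _ (mem b').
move/(congr1 (@ratr R)); rewrite rmorph_sum -(big_uvel (fun u => ratr _)) /= => moment.
transitivity (cs2 c ^+ 2 * \sum_(j < Q L) ratr (wt L (nnz (uvel j))
    * (hermite3 (uvel j) a b)%:~R * (hermite3 (uvel j) a' b')%:~R)).
  rewrite mulr_sumr; apply: eq_bigr => j _.
  by rewrite !H2_hermite3 /w !rmorphM /= !ratr_int; ring.
by rewrite moment rmorphD /= !rmorph_nat.
Qed.
End LatticeMoments.

Lemma sum_delta (R : nzRingType) n (F : 'I_n -> R) k : \sum_l (l == k)%:R * F l = F k.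
Proof.
rewrite (bigD1 k) //= big1 => [|l /negbTE lk]; last by rewrite lk mul0r.
by rewrite eqxx mul1r addr0.
Qed.

Lemma sum_pair_delta (R : nzRingType) n (F : 'I_n -> 'I_n -> R) a b :
  \sum_x \sum_y ((x == a) && (y == b))%:R * F x y = F a b.
Proof.
rewrite (bigD1 a) //= [X in _ + X]big1 => [|x /negbTE xa].
  by rewrite addr0 eqxx sum_delta.
by rewrite big1 // => y _; rewrite xa mul0r.
Qed.

Section Symmetrization.
Variables (R : realFieldType) (L : lattice).
Implicit Types (f h x : 'I_(Q L) -> R).

Definition sympart f (j : 'I_(Q L)) : R := (f j + f (bar j)) / 2%:R.

Lemma sympart_sym f : Ssym (sympart f).
Proof. by move=> j; rewrite /sympart barK addrC. Qed.

Lemma sum_bar (F : 'I_(Q L) -> R) : \sum_j F (bar j) = \sum_j F j.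
Proof. by rewrite [RHS](reindex_inj (can_inj (@barK L))). Qed.

Lemma sum_even_sympart h f : (forall j, h (bar j) = h j) ->
  \sum_j h j * sympart f j = \sum_j h j * f j.
Proof.
move=> h_even.
have sum_fbar : \sum_j h j * f (bar j) = \sum_j h j * f j.
  by rewrite -[RHS]sum_bar; apply: eq_bigr => j _; rewrite h_even.
have n2 : (2%:R : R) != 0 by rewrite pnatr_eq0.
transitivity ((\sum_j h j * f j + \sum_j h j * f (bar j)) / 2%:R).
  by rewrite -big_split mulr_suml; apply: eq_bigr => j _; rewrite /sympart /=; field.
by rewrite sum_fbar; field.
Qed.

Lemma sum_sympart f : \sum_j sympart f j = \sum_j f j.
Proof.
have := @sum_even_sympart (fun=> 1) f (fun=> erefl).
by under eq_bigr do rewrite mul1r; under [RHS]eq_bigr do rewrite mul1r.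
Qed.

Lemma ip_wl h x : ip (fun j => w R j * h j) x = \sum_j h j * x j.
Proof.
by apply: eq_bigr => j _; have := w_gt0 R j; rewrite lt0r => /andP[w_neq0 _]; field.
Qed.

Lemma ipC f h : ip f h = ip h f.
Proof. by apply: eq_bigr => j _; rewrite (mulrC (f j)). Qed.

End Symmetrization.

Section Decomposition.
Variables (R : realFieldType) (L : lattice) (c : R) (NG : nat).
Variable phi : 'I_NG -> 'I_(Q L) -> R.
Implicit Types (f g : 'I_(Q L) -> R) (i j : 'I_(Q L)).

Definition hermite_comb (A : 'I_(Defs.dim L) -> 'I_(Defs.dim L) -> R) j : R :=
  \sum_a \sum_b A a b * (w R j * H2 c j a b).

Definition ghost_comb (beta : 'I_NG -> R) j : R := \sum_k beta k * (w R j * phi k j).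

Lemma Aneq_add g f f' a b : (forall j, g j = f j + f' j) ->
  Aneq c g a b = Aneq c f a b + Aneq c f' a b.
Proof. by move=> gE; rewrite -big_split; apply: eq_bigr => j _; rewrite gE mulrDr. Qed.

Lemma PG_add g f f' i : (forall j, g j = f j + f' j) ->
  PG phi g i = PG phi f i + PG phi f' i.
Proof.
move=> gE; rewrite -big_split; apply: eq_bigr => k _ /=.
by rewrite -mulrDr -big_split; congr (_ * _); apply: eq_bigr => j _; rewrite gE mulrDr.
Qed.

Lemma Aneq_sympart f a b : Aneq c (sympart f) a b = Aneq c f a b.
Proof. by apply: sum_even_sympart => j; rewrite H2_bar. Qed.

Lemma PG_sympart f i : (forall k j, phi k (bar j) = phi k j) ->
  PG phi (sympart f) i = PG phi f i.
Proof. by move=> phi_even; apply: eq_bigr => k _; rewrite sum_even_sympart. Qed.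

Lemma Aneq_hermite_comb A a b :
  Aneq c (hermite_comb A) a b = cs2 c ^+ 2 * (A a b + A b a).
Proof.
have -> : Aneq c (hermite_comb A) a b =
    \sum_x \sum_y A x y * \sum_j w R j * H2 c j x y * H2 c j a b.
  rewrite /Aneq /hermite_comb; under eq_bigr do rewrite mulr_sumr; rewrite exchange_big.
  apply: eq_bigr => x _; under eq_bigr do rewrite mulr_sumr; rewrite exchange_big.
  by apply: eq_bigr => y _; rewrite mulr_sumr; apply: eq_bigr => j _; ring.
rewrite (eq_bigr (fun x => \sum_y (((x == a) && (y == b))%:R * (cs2 c ^+ 2 * A x y)
                    + ((x == b) && (y == a))%:R * (cs2 c ^+ 2 * A x y)))); last first.
  by move=> x _; apply: eq_bigr => y _; rewrite H2_fourth_moment; ring.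
under eq_bigr do rewrite big_split.
by rewrite big_split /= !sum_pair_delta mulrDr.
Qed.

Lemma hermite_comb_contraction A i : cs2 c != 0 ->
  w R i * (\sum_a \sum_b H2 c i a b * (cs2 c ^+ 2 * (A a b + A b a))) / (2%:R * cs2 c ^+ 2)
  = hermite_comb A i.
Proof.
move=> cs2_neq0; set S := \sum_a \sum_b A a b * H2 c i a b.
have -> : \sum_a \sum_b H2 c i a b * (cs2 c ^+ 2 * (A a b + A b a)) =
    cs2 c ^+ 2 * (S + \sum_a \sum_b A b a * H2 c i a b).
  rewrite /S -big_split mulr_sumr; apply: eq_bigr => a _.
  by rewrite -big_split mulr_sumr; apply: eq_bigr => b _ /=; ring.
have -> : \sum_a \sum_b A b a * H2 c i a b = S.
  by rewrite exchange_big; apply: eq_bigr => b _; apply: eq_bigr => a _; rewrite H2C.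
have -> : hermite_comb A i = w R i * S.
  rewrite /S mulr_sumr; apply: eq_bigr => a _.
  by rewrite mulr_sumr; apply: eq_bigr => b _; ring.
have n2 : (2%:R : R) != 0 by rewrite pnatr_eq0.
by field.
Qed.

Lemma NGk_eq0 k j : NGk phi k = 0 -> phi k j = 0.
Proof.
have wphi2_ge0 l : 0 <= w R l * phi k l ^+ 2 by rewrite mulr_ge0 ?sqr_ge0 ?ltW ?w_gt0.
move=> /(psumr_eq0P (fun l _ => wphi2_ge0 l))/(_ j isT)/eqP.
by rewrite mulf_eq0 sqrf_eq0 gt_eqF ?w_gt0 //= => /eqP.
Qed.

Section GhostOrthogonality.
Hypothesis horth : forall k l, k != l -> \sum_i w R i * phi k i * phi l i = 0.

Lemma ghost_moment beta k : \sum_j phi k j * ghost_comb beta j = beta k * NGk phi k.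
Proof.
have -> : \sum_j phi k j * ghost_comb beta j =
    \sum_l beta l * \sum_j w R j * phi l j * phi k j.
  under eq_bigr do rewrite mulr_sumr; rewrite exchange_big; apply: eq_bigr => l _.
  by rewrite mulr_sumr; apply: eq_bigr => j _; ring.
rewrite (bigD1 k) //= [X in _ + X]big1 => [|l lk]; last by rewrite horth ?mulr0.
by rewrite addr0 /NGk; congr (_ * _); apply: eq_bigr => j _; ring.
Qed.

Lemma PG_ghost_comb beta i : PG phi (ghost_comb beta) i = ghost_comb beta i.
Proof.
apply: eq_bigr => k _; rewrite ghost_moment.
have [NGk0 | NGk_neq0] := eqVneq (NGk phi k) 0.
  by rewrite (@NGk_eq0 k i NGk0) !(mulr0, mul0r).
by field.
Qed.

End GhostOrthogonality.

Section OrthogonalDecomposition.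
Hypothesis hdec : decomposition c phi.

Lemma Aneq_ghost_comb beta a b : Aneq c (ghost_comb beta) a b = 0.
Proof.
case: hdec => _ _ o2G _ _.
have S2_ab : S2 c (fun j => w R j * H2 c j a b).
  by exists (fun x y => ((x == a) && (y == b))%:R) => j; rewrite sum_pair_delta.
have SG_beta : SG phi (ghost_comb beta) by exists beta.
by rewrite /Aneq -ip_wl; exact: o2G.
Qed.

Lemma PG_hermite_comb A i : PG phi (hermite_comb A) i = 0.
Proof.
case: hdec => _ _ o2G _ _.
apply: big1 => k _.
have S2_A : S2 c (hermite_comb A) by exists A.
have SG_k : SG phi (fun j => w R j * phi k j).
  by exists (fun l => (l == k)%:R) => j; rewrite sum_delta.
have -> : \sum_j phi k j * hermite_comb A j = 0 by rewrite -ip_wl ipC; exact: o2G.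
by rewrite mulr0.
Qed.

Lemma sympart_decomposition f : \sum_j f j = 0 ->
  exists A beta, forall j, sympart f j = hermite_comb A j + ghost_comb beta j.
Proof.
move=> mass0; case: hdec => o02 o0G _ _ decomp.
have [f0 [f2 [fG [[a0 f0E] S2_f2 SG_fG fE]]]] := decomp _ (sympart_sym f).
have S0_w : S0 (fun j => w R j * 1) by exists 1 => j; rewrite mulr1 mul1r.
have sum_orth g : ip (fun j => w R j * 1) g = 0 -> \sum_j g j = 0.
  by rewrite ip_wl; under eq_bigr do rewrite mul1r.
have sum_f2 : \sum_j f2 j = 0 by apply: sum_orth; exact: o02.
have sum_fG : \sum_j fG j = 0 by apply: sum_orth; exact: o0G.
have a0_eq0 : a0 = 0.
  have := sum_sympart f; rewrite mass0 (eq_bigr _ (fun j _ => fE j)) !big_split /=.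
  rewrite sum_f2 sum_fG !addr0.
  by rewrite (eq_bigr _ (fun j _ => f0E j)) -mulr_sumr sum_w mulr1.
case: S2_f2 SG_fG => [A f2E] [beta fGE].
by exists A, beta => j; rewrite fE f0E a0_eq0 mul0r add0r f2E fGE.
Qed.

End OrthogonalDecomposition.
End Decomposition.

Theorem theorem1 (R : realFieldType) (L : lattice) (c : R) (hc : 0 < c)
  (NG : nat) (phi : 'I_NG -> 'I_(Q L) -> R)
  (heven : forall k i, phi k (bar i) = phi k i)
  (horth : forall k l, k != l -> \sum_i w R i * phi k i * phi l i = 0)
  (hdec : decomposition c phi)
  (f : 'I_(Q L) -> R) (hmass : \sum_i f i = 0) :
  forall i : 'I_(Q L),
    w R i * (\sum_a \sum_b H2 c i a b * Aneq c f a b) / (2%:R * cs2 c ^+ 2)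
    = (f i + f (bar i)) / 2%:R - PG phi f i.
Proof.
move=> i.
have [A [beta fE]] := sympart_decomposition hdec hmass.
have AneqE a b : Aneq c f a b = cs2 c ^+ 2 * (A a b + A b a).
  rewrite -Aneq_sympart (Aneq_add _ a b fE) Aneq_hermite_comb.
  by rewrite (Aneq_ghost_comb hdec) addr0.
have PGE : PG phi f i = ghost_comb phi beta i.
  rewrite -(PG_sympart f i heven) (PG_add _ i fE).
  by rewrite (PG_hermite_comb hdec) (PG_ghost_comb horth) add0r.
have cs2_neq0 : cs2 c != 0 by rewrite /cs2 mulf_neq0 ?expf_neq0 ?invr_eq0 ?pnatr_eq0 ?lt0r_neq0.
under eq_bigr do under eq_bigr do rewrite AneqE.
by rewrite hermite_comb_contraction // PGE -/(sympart f i) fE addrK.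
Qed.
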